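(* Let $(W,\odot,\mathbb{1})$ be a monoid and let $(M,+,\mathbb{0},\otimes)$ be an $\omega$-bicontinuous (left) $W$-module. Then for every $W$-wgcl program $C$ and every postweighting $f\in\mathrm{Wt}=M^\Sigma$, $$\mathrm{wlp}[\![C]\!](f)=\mathrm{wp}[\![C]\!](f)+\mathrm{wlp}[\![C]\!](\mathbb{0}),$$ where $\mathbb{0}$ is the constant-$\mathbb{0}$ weighting.
   Context: A (left) module over a monoid $(W,\odot,\mathbb{1})$ is a commutative monoid $(M,+,\mathbb{0})$ with an action $\otimes\colon W\times M\to M$ such that $(v\odot w)\otimes a=v\otimes(w\otimes a)$, $v\otimes(a+b)=(v\otimes a)+(v\otimes b)$, $\mathbb{1}\otimes a=a$, $v\otimes\mathbb{0}=\mathbb{0}$. The natural order is $a\preceq b$ iff $\exists c\colon a+c=b$. $M$ is $\omega$-bicontinuous if $\preceq$ is a partial order, $M$ has a greatest element $\top$, every increasing $\omega$-chain has a supremum and every decreasing $\omega$-chain has an infimum, and addition (in each argument) and, for each fixed $w\in W$, the map $a\mapsto w\otimes a$ preserve both suprema of increasing $\omega$-chains and infima of decreasing $\omega$-chains. States, programs: $\Sigma$ is the set of states (maps from variables to values); expressions $E$ evaluate to $E(\sigma)$; guards $\varphi$ are predicates on states. $W$-wgcl programs: $C::= x:=E \mid C;C \mid \mathtt{if}(\varphi)\{C\}\mathtt{else}\{C\} \mid \{C\}\oplus\{C\} \mid \mathtt{weight}\ a\ (a\in W) \mid \mathtt{while}(\varphi)\{C\}$. Weightings $\mathrm{Wt}=M^\Sigma$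 with pointwise operations and order; $([\varphi]\cdot f)(\sigma)=f(\sigma)$ if $\sigma\models\varphi$ else $\mathbb{0}$; $f[x/E](\sigma)=f(\sigma[x\mapsto E(\sigma)])$. For $T\in\{\mathrm{wp},\mathrm{wlp}\}$: $T[\![x:=E]\!](f)=f[x/E]$; $T[\![C_1;C_2]\!](f)=T[\![C_1]\!](T[\![C_2]\!](f))$; $T[\![\mathtt{if}(\varphi)\{C_1\}\mathtt{else}\{C_2\}]\!](f)=[\varphi]\cdot T[\![C_1]\!](f)+[\neg\varphi]\cdot T[\![C_2]\!](f)$; $T[\![\{C_1\}\oplus\{C_2\}]\!](f)=T[\![C_1]\!](f)+T[\![C_2]\!](f)$; $T[\![\mathtt{weight}\ a]\!](f)=a\otimes f$; $T[\![\mathtt{while}(\varphi)\{C'\}]\!](f)$ is the least fixed point (for $T=\mathrm{wp}$), resp. greatest fixed point (for $T=\mathrm{wlp}$), w.r.t. $\preceq$ of $X\mapsto[\neg\varphi]\cdot f+[\varphi]\cdot T[\![C']\!](X)$. *)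

From Stdlib Require Import ClassicalEpsilon.

Set Implicit Arguments.

Definition is_monoid (W : Type) (mul : W -> W -> W) (one : W) : Prop :=
  (forall u v w, mul (mul u v) w = mul u (mul v w)) /\
  (forall w, mul one w = w) /\
  (forall w, mul w one = w).

Definition is_comm_monoid (M : Type) (add : M -> M -> M) (zero : M) : Prop :=
  (forall a b c, add (add a b) c = add a (add b c)) /\
  (forall a b, add a b = add b a) /\
  (forall a, add zero a = a).

Definition is_left_module (W M : Type) (mul : W -> W -> W) (one : W)
  (add : M -> M -> M) (zero : M) (act : W -> M -> M) : Prop :=
  is_comm_monoid add zero /\
  (forall v w a, act (mul v w) a = act v (act w a)) /\
  (forall v a b, act v (add a b) = add (act v a) (act v b)) /\
  (forall a, act one a = a) /\
  (forall v, act v zero = zero).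

Definition nat_le (M : Type) (add : M -> M -> M) (a b : M) : Prop :=
  exists c, add a c = b.

Section Order.
Variables (A : Type) (le : A -> A -> Prop).

Definition is_partial_order : Prop :=
  (forall a, le a a) /\
  (forall a b c, le a b -> le b c -> le a c) /\
  (forall a b, le a b -> le b a -> a = b).

Definition increasing_chain (c : nat -> A) : Prop := forall n, le (c n) (c (S n)).
Definition decreasing_chain (c : nat -> A) : Prop := forall n, le (c (S n)) (c n).

Definition is_sup (c : nat -> A) (s : A) : Prop :=
  (forall n, le (c n) s) /\ (forall u, (forall n, le (c n) u) -> le s u).
Definition is_inf (c : nat -> A) (s : A) : Prop :=
  (forall n, le s (c n)) /\ (forall l, (forall n, le l (c n)) -> le l s).

Definition is_lfp (F : A -> A) (x : A) : Prop :=
  F x = x /\ (forall y, F y = y -> le x y).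
Definition is_gfp (F : A -> A) (x : A) : Prop :=
  F x = x /\ (forall y, F y = y -> le y x).
End Order.

Definition omega_bicont_map (M : Type) (le : M -> M -> Prop) (g : M -> M) : Prop :=
  (forall c s, increasing_chain le c -> is_sup le c s -> is_sup le (fun n => g (c n)) (g s)) /\
  (forall c s, decreasing_chain le c -> is_inf le c s -> is_inf le (fun n => g (c n)) (g s)).

Definition omega_bicontinuous (W M : Type) (add : M -> M -> M) (act : W -> M -> M) : Prop :=
  let le := nat_le add in
  is_partial_order le /\
  (exists top, forall a, le a top) /\
  (forall c, increasing_chain le c -> exists s, is_sup le c s) /\
  (forall c, decreasing_chain le c -> exists s, is_inf le c s) /\
  (forall b, omega_bicont_map le (fun a => add a b)) /\
  (forall b, omega_bicont_map le (fun a => add b a)) /\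
  (forall w, omega_bicont_map le (act w)).

Section Programs.
Variables (W Var Val : Type).

Definition state := Var -> Val.

Inductive prog : Type :=
| Assign : Var -> (state -> Val) -> prog
| Seq : prog -> prog -> prog
| Ite : (state -> bool) -> prog -> prog -> prog
| Choice : prog -> prog -> prog
| Weight : W -> prog
| While : (state -> bool) -> prog -> prog.
End Programs.

Arguments Assign {W Var Val}.
Arguments Seq {W Var Val}.
Arguments Ite {W Var Val}.
Arguments Choice {W Var Val}.
Arguments Weight {W Var Val}.
Arguments While {W Var Val}.

Section Transformers.
Variables (W M Var Val : Type).
Variable var_eq_dec : forall x y : Var, {x = y} + {x <> y}.
Variables (add : M -> M -> M) (zero : M) (act : W -> M -> M).

Definition weighting := state Var Val -> M.

Definition wt_add (f g : weighting) : weighting := fun s => add (f s) (g s).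
Definition wt_zero : weighting := fun _ => zero.
Definition wt_act (a : W) (f : weighting) : weighting := fun s => act a (f s).
Definition wt_le (f g : weighting) : Prop := forall s, nat_le add (f s) (g s).
Definition iverson (phi : state Var Val -> bool) (f : weighting) : weighting :=
  fun s => if phi s then f s else zero.

Definition upd (s : state Var Val) (x : Var) (v : Val) : state Var Val :=
  fun y => if var_eq_dec y x then v else s y.
Definition subst (f : weighting) (x : Var) (E : state Var Val -> Val) : weighting :=
  fun s => f (upd s x (E s)).

(* the least / greatest fixed point (w.r.t. the pointwise order), chosen by
   classical description; it is unique whenever it exists *)
Definition lfp (F : weighting -> weighting) : weighting :=
  epsilon (inhabits wt_zero) (is_lfp wt_le F).
Definition gfp (F : weighting -> weighting) : weighting :=
  epsilon (inhabits wt_zero) (is_gfp wt_le F).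

Fixpoint wT (liberal : bool) (C : prog W Var Val) (f : weighting) : weighting :=
  match C with
  | Assign x E => subst f x E
  | Seq C1 C2 => wT liberal C1 (wT liberal C2 f)
  | Ite phi C1 C2 =>
      wt_add (iverson phi (wT liberal C1 f))
             (iverson (fun s => negb (phi s)) (wT liberal C2 f))
  | Choice C1 C2 => wt_add (wT liberal C1 f) (wT liberal C2 f)
  | Weight a => wt_act a f
  | While phi C' =>
      let Phi := fun X => wt_add (iverson (fun s => negb (phi s)) f)
                                 (iverson phi (wT liberal C' X)) in
      if liberal then gfp Phi else lfp Phi
  end.

Definition wp := wT false.
Definition wlp := wT true.
End Transformers.

(* Induction on the program; only the loop is nontrivial. There the characteristic
   function of [wlp] for [f] maps [A + B] to the characteristic function of [wp] for
   [f] at [A] plus that of [wlp] for [0] at [B] (induction hypothesis and additivity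
   of [wp]), which makes the sum of their fixed points the greatest fixed point.
   Fixed points are obtained by Kleene iteration, so all transformers must be
   omega-continuous: [wp] for the natural order and [wlp] for its dual, in which
   greatest fixed points become least ones and the same argument applies. *)

From Stdlib Require Import ClassicalEpsilon FunctionalExtensionality Lia.

Set Implicit Arguments.

Section OmegaChains.
Variables (A : Type) (R : A -> A -> Prop).
Hypothesis R_po : is_partial_order R.

Lemma po_refl a : R a a.
Proof. apply R_po. Qed.

Lemma po_trans a b c : R a b -> R b c -> R a c.
Proof. apply R_po. Qed.

Lemma po_antisym a b : R a b -> R b a -> a = b.
Proof. apply R_po. Qed.

Definition monotone (F : A -> A) : Prop := forall x y, R x y -> R (F x) (F y).

Definition omega_continuous (F : A -> A) : Prop :=
  forall c s, increasing_chain R c -> is_sup R c s -> is_sup R (fun n => F (c n)) (F s).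

Definition omega_continuous2 (G : A -> A -> A) : Prop :=
  forall c d s t, increasing_chain R c -> increasing_chain R d ->
  is_sup R c s -> is_sup R d t -> is_sup R (fun n => G (c n) (d n)) (G s t).

Lemma chain_le c n m : increasing_chain R c -> n <= m -> R (c n) (c m).
Proof.
  intros Hc Hnm; induction Hnm; [apply po_refl | eapply po_trans; eauto].
Qed.

Lemma const_chain a : increasing_chain R (fun _ => a).
Proof. intro; apply po_refl. Qed.

Lemma is_sup_const a : is_sup R (fun _ => a) a.
Proof. split; [intro; apply po_refl | intros u Hu; apply (Hu 0)]. Qed.

Lemma is_sup_unique c s t : is_sup R c s -> is_sup R c t -> s = t.
Proof. intros [Hs Hs'] [Ht Ht']; apply po_antisym; auto. Qed.

Lemma is_sup_tail c s : increasing_chain R c -> is_sup R (fun n => c (S n)) s -> is_sup R c s.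
Proof.
  intros Hc [Hub Hlub]; split.
  - intros [|n]; [eapply po_trans; [apply Hc | apply Hub] | apply Hub].
  - intros u Hu; apply Hlub; intro n; apply Hu.
Qed.

Definition two_step (x y : A) (n : nat) : A := match n with 0 => x | S _ => y end.

Lemma two_step_chain x y : R x y -> increasing_chain R (two_step x y).
Proof. intros Hxy [|n]; [exact Hxy | apply po_refl]. Qed.

Lemma two_step_sup x y : R x y -> is_sup R (two_step x y) y.
Proof.
  intro Hxy; split; [intros [|n]; [exact Hxy | apply po_refl] | intros u Hu; apply (Hu 1)].
Qed.

Lemma omega_continuous_monotone F : omega_continuous F -> monotone F.
Proof.
  intros HF x y Hxy; exact (proj1 (HF _ _ (two_step_chain Hxy) (two_step_sup Hxy)) 0).
Qed.

Lemma omega_continuous_chain F c :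
  omega_continuous F -> increasing_chain R c -> increasing_chain R (fun n => F (c n)).
Proof. intros HF Hc n; apply (omega_continuous_monotone HF), Hc. Qed.

Lemma omega_continuous_comp F G :
  omega_continuous F -> omega_continuous G -> omega_continuous (fun x => F (G x)).
Proof.
  intros HF HG c s Hc Hs; apply HF; [apply omega_continuous_chain | apply HG]; auto.
Qed.

Lemma omega_continuous2_monotone G p p' x x' :
  omega_continuous2 G -> R p p' -> R x x' -> R (G p x) (G p' x').
Proof.
  intros HG Hp Hx.
  exact (proj1 (HG _ _ _ _ (two_step_chain Hp) (two_step_chain Hx)
                  (two_step_sup Hp) (two_step_sup Hx)) 0).
Qed.

Lemma omega_continuous2_r G p : omega_continuous2 G -> omega_continuous (G p).
Proof. intros HG c s Hc Hs; apply HG; auto using const_chain, is_sup_const. Qed.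

Lemma omega_continuous2_comp op F G : omega_continuous2 op ->
  omega_continuous F -> omega_continuous G -> omega_continuous (fun x => op (F x) (G x)).
Proof.
  intros Hop HF HG c s Hc Hs; apply Hop; auto using omega_continuous_chain.
Qed.

(* A map continuous in each argument separately is jointly continuous: the
   diagonal [op (c n) (d n)] is cofinal in the double chain [op (c n) (d m)]. *)
Lemma omega_continuous2_separately op :
  (forall b, omega_continuous (fun a => op a b)) -> (forall a, omega_continuous (op a)) ->
  omega_continuous2 op.
Proof.
  intros Hl Hr c d s t Hc Hd Hs Ht.
  assert (Hmono : forall a a' b b', R a a' -> R b b' -> R (op a b) (op a' b')).
  { intros a a' b b' Ha Hb; apply po_trans with (op a' b).
    - exact (omega_continuous_monotone (Hl b) Ha).
    - exact (omega_continuous_monotone (Hr a') Hb). }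
  split.
  - intro n; apply Hmono; [apply Hs | apply Ht].
  - intros u Hu; apply (Hr s _ _ Hd Ht); intro m.
    apply (Hl (d m) _ _ Hc Hs); intro n.
    apply po_trans with (op (c (max n m)) (d (max n m))); [| apply Hu].
    apply Hmono; apply chain_le; auto; lia.
Qed.

Lemma iter_monotone F n x y : monotone F -> R x y -> R (Nat.iter n F x) (Nat.iter n F y).
Proof. intros HF Hxy; induction n; simpl; auto. Qed.

Lemma is_lfp_unique F x y : is_lfp R F x -> is_lfp R F y -> x = y.
Proof. intros [Hx Hx'] [Hy Hy']; apply po_antisym; auto. Qed.

Lemma epsilon_is_lfp (i : inhabited A) F x : is_lfp R F x -> epsilon i (is_lfp R F) = x.
Proof. intro Hx; apply is_lfp_unique with F; auto; apply epsilon_spec; eauto. Qed.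

Section Kleene.
Variable bot : A.

Lemma iter_chain F : (forall a, R bot a) -> monotone F ->
  increasing_chain R (fun n => Nat.iter n F bot).
Proof. intros Hbot HF n; induction n; simpl; [apply Hbot | apply HF, IHn]. Qed.

Lemma kleene_lfp F s : (forall a, R bot a) -> omega_continuous F ->
  is_sup R (fun n => Nat.iter n F bot) s -> is_lfp R F s.
Proof.
  intros Hbot HF Hs.
  pose proof (iter_chain Hbot (omega_continuous_monotone HF)) as Hch.
  split.
  - apply is_sup_unique with (fun n => Nat.iter n F bot); auto.
    apply is_sup_tail; auto; exact (HF _ _ Hch Hs).
  - intros y Hy; apply Hs; intro n; induction n; simpl; [apply Hbot |].
    rewrite <- Hy; apply (omega_continuous_monotone HF), IHn.
Qed.

(* Each Kleene iterate of [G p] is continuous in [p]; exchanging the two suprema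
   gives continuity of the least fixed point. *)
Lemma lfp_family_continuous G L : omega_continuous2 G ->
  (forall p, is_sup R (fun n => Nat.iter n (G p) bot) (L p)) -> omega_continuous L.
Proof.
  intros HG HL c s Hc Hs.
  assert (Hiter : forall n, increasing_chain R (fun k => Nat.iter n (G (c k)) bot) /\
                  is_sup R (fun k => Nat.iter n (G (c k)) bot) (Nat.iter n (G s) bot)).
  { intro n; induction n as [|n [Hch Hsup]]; simpl.
    - split; [apply const_chain | apply is_sup_const].
    - split; [intro k; apply omega_continuous2_monotone; auto | apply HG; auto]. }
  split.
  - intro k; apply (HL (c k)); intro n.
    apply po_trans with (Nat.iter n (G s) bot); [apply (Hiter n) | apply (HL s)].
  - intros u Hu; apply (HL s); intro n; apply (Hiter n); intro k.
    apply po_trans with (L (c k)); [apply (HL (c k)) | apply Hu].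
Qed.
End Kleene.

End OmegaChains.

Section Pointwise.
Variables (X A : Type) (R : A -> A -> Prop).
Hypothesis R_po : is_partial_order R.
Hypothesis R_sups : forall c, increasing_chain R c -> exists s, is_sup R c s.

Definition pointwise (f g : X -> A) : Prop := forall x, R (f x) (g x).

Lemma pointwise_po : is_partial_order pointwise.
Proof.
  split; [| split].
  - intros f x; apply (po_refl R_po).
  - intros f g h Hfg Hgh x; eapply (po_trans R_po); eauto.
  - intros f g Hfg Hgf; extensionality x; apply (po_antisym R_po); auto.
Qed.

Lemma is_sup_pointwise c s :
  (forall x, is_sup R (fun n => c n x) (s x)) -> is_sup pointwise c s.
Proof.
  intro Hs; split.
  - intros n x; apply Hs.
  - intros u Hu x; apply Hs; intro n; apply Hu.
Qed.

Definition pointwise_sup (c : nat -> X -> A) (x : X) : A :=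
  epsilon (inhabits (c 0 x)) (is_sup R (fun n => c n x)).

Lemma pointwise_sup_spec c x :
  increasing_chain pointwise c -> is_sup R (fun n => c n x) (pointwise_sup c x).
Proof. intro Hc; unfold pointwise_sup; apply epsilon_spec, R_sups; intro n; apply Hc. Qed.

Lemma pointwise_sups c : increasing_chain pointwise c -> exists s, is_sup pointwise c s.
Proof.
  intro Hc; exists (pointwise_sup c); apply is_sup_pointwise; intro x.
  apply pointwise_sup_spec, Hc.
Qed.

Lemma is_sup_at c s x :
  increasing_chain pointwise c -> is_sup pointwise c s -> is_sup R (fun n => c n x) (s x).
Proof.
  intros Hc Hs.
  replace s with (pointwise_sup c); [apply pointwise_sup_spec, Hc |].
  apply (is_sup_unique pointwise_po) with c; auto.
  apply is_sup_pointwise; intro y; apply pointwise_sup_spec, Hc.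
Qed.

Lemma pointwise_continuous (g : X -> A -> A) :
  (forall x, omega_continuous R (g x)) -> omega_continuous pointwise (fun f x => g x (f x)).
Proof.
  intros Hg c s Hc Hs; apply is_sup_pointwise; intro x.
  apply Hg; [intro n; apply Hc | apply is_sup_at; auto].
Qed.

Lemma precomp_continuous (h : X -> X) : omega_continuous pointwise (fun f x => f (h x)).
Proof.
  intros c s Hc Hs; apply is_sup_pointwise; intro x; apply is_sup_at; auto.
Qed.
End Pointwise.

Lemma iter_split {A : Type} {op : A -> A -> A} {Psi P Q : A -> A}
  (Hsplit : forall a b, Psi (op a b) = op (P a) (Q b)) n a b :
  Nat.iter n Psi (op a b) = op (Nat.iter n P a) (Nat.iter n Q b).
Proof. induction n; simpl; [reflexivity | rewrite IHn; apply Hsplit]. Qed.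

Record module_cpo (W M : Type) (add : M -> M -> M) (act : W -> M -> M)
    (R : M -> M -> Prop) (bot : M) : Prop := {
  mcpo_po : is_partial_order R;
  mcpo_bot : forall a, R bot a;
  mcpo_sups : forall c, increasing_chain R c -> exists s, is_sup R c s;
  mcpo_add : forall b, omega_continuous R (fun a => add a b);
  mcpo_act : forall w, omega_continuous R (act w)
}.

Section Module.
Variables (W M : Type) (mul : W -> W -> W) (one : W).
Variables (add : M -> M -> M) (zero : M) (act : W -> M -> M).
Hypothesis HM : is_left_module mul one add zero act.

Lemma addA a b c : add (add a b) c = add a (add b c).
Proof. apply HM. Qed.

Lemma addC a b : add a b = add b a.
Proof. apply HM. Qed.

Lemma add0 a : add zero a = a.
Proof. apply HM. Qed.

Lemma addr0 a : add a zero = a.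
Proof. rewrite addC; apply add0. Qed.

Lemma addACA a b c d : add (add a b) (add c d) = add (add a c) (add b d).
Proof. rewrite !addA, <- (addA b c d), (addC b c), addA; reflexivity. Qed.

Lemma actD w a b : act w (add a b) = add (act w a) (act w b).
Proof. apply HM. Qed.

Lemma act0 w : act w zero = zero.
Proof. apply HM. Qed.

(* Indexed like the [liberal] flag of [wT]. *)
Definition nat_order (l : bool) : M -> M -> Prop :=
  if l then fun a b => nat_le add b a else nat_le add.

Hypothesis Hbi : omega_bicontinuous add act.

Lemma nat_le_module_cpo : module_cpo add act (nat_order false) zero.
Proof.
  destruct Hbi as (Hpo & _ & Hsup & _ & Hadd & _ & Hact).
  constructor; auto.
  - intro a; exists a; apply add0.
  - intro b; exact (proj1 (Hadd b)).
  - intro w; exact (proj1 (Hact w)).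
Qed.

Lemma nat_ge_module_cpo : exists top, module_cpo add act (nat_order true) top.
Proof.
  destruct Hbi as ((Hrefl & Htrans & Hanti) & [top Htop] & _ & Hinf & Hadd & _ & Hact).
  exists top; constructor; auto.
  - split; [exact Hrefl | split]; [intros a b c Hab Hbc; exact (Htrans c b a Hbc Hab) |].
    intros a b Hab Hba; exact (Hanti a b Hba Hab).
  - intro b; exact (proj2 (Hadd b)).
  - intro w; exact (proj2 (Hact w)).
Qed.

Lemma nat_order_module_cpo l : exists bot, module_cpo add act (nat_order l) bot.
Proof. destruct l; [apply nat_ge_module_cpo | exists zero; apply nat_le_module_cpo]. Qed.

Variables (Var Val : Type) (var_eq_dec : forall x y : Var, {x = y} + {x <> y}).
Notation Wt := (weighting M Var Val).
Notation wt0 := (@wt_zero M Var Val zero).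

Lemma wt_add_zero_l (f : Wt) : wt_add add wt0 f = f.
Proof. extensionality s; apply add0. Qed.

Lemma wt_add_zero_r (f : Wt) : wt_add add f wt0 = f.
Proof. extensionality s; apply addr0. Qed.

Lemma wt_addA (f g h : Wt) : wt_add add (wt_add add f g) h = wt_add add f (wt_add add g h).
Proof. extensionality s; apply addA. Qed.

Lemma wt_addACA (f g h k : Wt) :
  wt_add add (wt_add add f g) (wt_add add h k) = wt_add add (wt_add add f h) (wt_add add g k).
Proof. extensionality s; apply addACA. Qed.

Lemma iverson_add phi (f g : Wt) :
  iverson zero phi (wt_add add f g) = wt_add add (iverson zero phi f) (iverson zero phi g).
Proof. extensionality s; unfold iverson, wt_add; destruct (phi s); rewrite ?add0; auto. Qed.

Lemma wt_actD a (f g : Wt) :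
  wt_act act a (wt_add add f g) = wt_add add (wt_act act a f) (wt_act act a g).
Proof. extensionality s; apply actD. Qed.

Lemma wt_act0 a : wt_act act a wt0 = wt0.
Proof. extensionality s; apply act0. Qed.

Definition loop_char (phi : state Var Val -> bool) (T : Wt -> Wt) (f X : Wt) : Wt :=
  wt_add add (iverson zero (fun s => negb (phi s)) f) (iverson zero phi (T X)).

Definition loop_fix (R : M -> M -> Prop) phi T (f : Wt) : Wt :=
  epsilon (inhabits wt0) (is_lfp (pointwise R) (loop_char phi T f)).

Section Continuity.
Variables (R : M -> M -> Prop) (bot : M).
Hypothesis HR : module_cpo add act R bot.
Local Notation WR := (@pointwise (state Var Val) M R).

Lemma WR_po : is_partial_order WR.
Proof. apply pointwise_po, HR. Qed.

Lemma WR_bot (f : Wt) : WR (fun _ => bot) f.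
Proof. intro s; apply HR. Qed.

Lemma wt_add_continuous2 : omega_continuous2 WR (wt_add add).
Proof.
  apply (omega_continuous2_separately WR_po); intro g.
  - exact (pointwise_continuous (mcpo_po HR) (mcpo_sups HR) (fun s a => add a (g s))
             (fun s => mcpo_add HR (g s))).
  - apply (pointwise_continuous (mcpo_po HR) (mcpo_sups HR) (fun s a => add (g s) a)).
    intros s c t Hc Ht.
    replace (fun n => add (g s) (c n)) with (fun n => add (c n) (g s))
      by (extensionality n; apply addC).
    rewrite addC; apply HR; auto.
Qed.

Lemma iverson_continuous phi : omega_continuous WR (iverson zero phi).
Proof.
  apply (pointwise_continuous (mcpo_po HR) (mcpo_sups HR)
           (fun s a => if phi s then a else zero)).
  intro s; destruct (phi s); intros c t Hc Ht; [exact Ht | apply (is_sup_const (mcpo_po HR))].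
Qed.

Lemma wt_act_continuous a : omega_continuous WR (wt_act act a).
Proof.
  exact (pointwise_continuous (mcpo_po HR) (mcpo_sups HR) (fun _ => act a)
           (fun _ => mcpo_act HR a)).
Qed.

Lemma subst_continuous x E : omega_continuous WR (fun f : Wt => subst var_eq_dec f x E).
Proof.
  exact (precomp_continuous (mcpo_po HR) (mcpo_sups HR) (fun s => upd var_eq_dec s x (E s))).
Qed.

Section Loop.
Variables (phi : state Var Val -> bool) (T : Wt -> Wt).
Hypothesis HT : omega_continuous WR T.

Lemma loop_char_continuous2 : omega_continuous2 WR (loop_char phi T).
Proof.
  intros c d s t Hc Hd Hs Ht; unfold loop_char.
  pose proof (omega_continuous_comp WR_po (iverson_continuous phi) HT) as HiT.
  apply wt_add_continuous2.
  - apply (omega_continuous_chain WR_po); [apply iverson_continuous | auto].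
  - apply (omega_continuous_chain WR_po HiT); auto.
  - apply iverson_continuous; auto.
  - apply HiT; auto.
Qed.

Lemma loop_char_continuous f : omega_continuous WR (loop_char phi T f).
Proof. apply (omega_continuous2_r WR_po), loop_char_continuous2. Qed.

Lemma loop_iter_chain f :
  increasing_chain WR (fun n => Nat.iter n (loop_char phi T f) (fun _ => bot)).
Proof.
  apply (iter_chain _ WR_bot), (omega_continuous_monotone WR_po), loop_char_continuous.
Qed.

Lemma loop_fix_is_sup f :
  is_sup WR (fun n => Nat.iter n (loop_char phi T f) (fun _ => bot)) (loop_fix R phi T f).
Proof.
  destruct (pointwise_sups (mcpo_sups HR) (loop_iter_chain f)) as [s Hs].
  unfold loop_fix; rewrite (epsilon_is_lfp WR_po _ (x := s)); auto.
  apply (kleene_lfp WR_po _ WR_bot); auto using loop_char_continuous.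
Qed.

Lemma loop_fix_continuous : omega_continuous WR (loop_fix R phi T).
Proof. exact (lfp_family_continuous WR_po _ _ loop_char_continuous2 loop_fix_is_sup). Qed.
End Loop.
End Continuity.

Notation wTl := (@wT W M Var Val var_eq_dec add zero act).

Lemma loop_char_add phi {T T1 T2 : Wt -> Wt}
  (HT : forall A B, T (wt_add add A B) = wt_add add (T1 A) (T2 B)) (f g A B : Wt) :
  loop_char phi T (wt_add add f g) (wt_add add A B) =
  wt_add add (loop_char phi T1 f A) (loop_char phi T2 g B).
Proof. unfold loop_char; rewrite HT, !iverson_add; apply wt_addACA. Qed.

Lemma wT_While l phi C : wTl l (While phi C) = loop_fix (nat_order l) phi (wTl l C).
Proof. extensionality f; destruct l; reflexivity. Qed.

Lemma wT_continuous l C : omega_continuous (pointwise (nat_order l)) (wTl l C).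
Proof.
  destruct (nat_order_module_cpo l) as [bot HR].
  pose proof (WR_po HR) as Hpo.
  induction C as [x E | C1 IH1 C2 IH2 | phi C1 IH1 C2 IH2 | C1 IH1 C2 IH2 | a | phi C IH].
  - apply (subst_continuous HR).
  - exact (omega_continuous_comp Hpo IH1 IH2).
  - apply (omega_continuous2_comp Hpo (wt_add_continuous2 HR));
      apply (omega_continuous_comp Hpo (iverson_continuous HR _)); assumption.
  - exact (omega_continuous2_comp Hpo (wt_add_continuous2 HR) IH1 IH2).
  - apply (wt_act_continuous HR).
  - rewrite wT_While; apply (loop_fix_continuous HR), IH.
Qed.

Lemma wp_add C (f g : Wt) :
  wTl false C (wt_add add f g) = wt_add add (wTl false C f) (wTl false C g).
Proof.
  revert f g.
  induction C as [x E | C1 IH1 C2 IH2 | phi C1 IH1 C2 IH2 | C1 IH1 C2 IH2 | a | phi C IH];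
    intros f g.
  - reflexivity.
  - simpl; rewrite IH2; apply IH1.
  - simpl; rewrite IH1, IH2, !iverson_add; apply wt_addACA.
  - simpl; rewrite IH1, IH2; apply wt_addACA.
  - apply wt_actD.
  - rewrite wT_While.
    pose proof nat_le_module_cpo as HR.
    pose proof (wT_continuous false C) as HT.
    apply (is_sup_unique (WR_po HR))
      with (fun n => Nat.iter n (loop_char phi (wTl false C) (wt_add add f g)) wt0).
    + exact (loop_fix_is_sup HR phi HT (wt_add add f g)).
    + replace (fun n => Nat.iter n (loop_char phi (wTl false C) (wt_add add f g)) wt0)
        with (fun n => wt_add add (Nat.iter n (loop_char phi (wTl false C) f) wt0)
                                  (Nat.iter n (loop_char phi (wTl false C) g) wt0)).
      * apply (wt_add_continuous2 HR);
          [exact (loop_iter_chain HR phi HT f) | exact (loop_iter_chain HR phi HT g)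
          | exact (loop_fix_is_sup HR phi HT f) | exact (loop_fix_is_sup HR phi HT g)].
      * extensionality n.
        rewrite <- (iter_split (loop_char_add phi IH f g)).
        now rewrite wt_add_zero_l.
Qed.

(* Any fixed point [y] of [Psi] unfolds to [P^n 0 + Q^n y <= L + Q^n top], whose
   infimum over [n] is [L + G]. *)
Lemma lfp_add_gfp_is_gfp {t : M} {P Q Psi : Wt -> Wt} {L G : Wt}
  (HR : module_cpo add act (nat_order true) t)
  (HP : omega_continuous (pointwise (nat_order false)) P)
  (HQ : omega_continuous (pointwise (nat_order true)) Q)
  (Hsplit : forall A B, Psi (wt_add add A B) = wt_add add (P A) (Q B))
  (HL : is_sup (pointwise (nat_order false)) (fun n => Nat.iter n P wt0) L)
  (HG : is_sup (pointwise (nat_order true)) (fun n => Nat.iter n Q (fun _ => t)) G) :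
  is_gfp (wt_le add) Psi (wt_add add L G).
Proof.
  pose proof nat_le_module_cpo as HR0.
  pose proof (WR_po HR) as Hpo.
  destruct (kleene_lfp (WR_po HR0) _ (WR_bot HR0) HP HL) as [HPL _].
  destruct (kleene_lfp Hpo _ (WR_bot HR) HQ HG) as [HQG _].
  split; [rewrite Hsplit, HPL, HQG; reflexivity |].
  intros y Hy.
  assert (Hyn : forall n, y = wt_add add (Nat.iter n P wt0) (Nat.iter n Q y)).
  { intro n; rewrite <- (iter_split Hsplit), wt_add_zero_l.
    induction n; simpl; [reflexivity | rewrite <- IHn; symmetry; exact Hy]. }
  pose proof (iter_chain _ (WR_bot HR) (omega_continuous_monotone Hpo HQ)) as HQch.
  apply (omega_continuous2_r Hpo L (wt_add_continuous2 HR) HQch HG).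
  intro n; rewrite (Hyn n).
  apply (omega_continuous2_monotone Hpo);
    [apply (wt_add_continuous2 HR) | exact (proj1 HL n) |].
  apply iter_monotone; [apply (omega_continuous_monotone Hpo HQ) | apply (WR_bot HR)].
Qed.

Lemma wlp_split C (f : Wt) : wTl true C f = wt_add add (wTl false C f) (wTl true C wt0).
Proof.
  revert f.
  induction C as [x E | C1 IH1 C2 IH2 | phi C1 IH1 C2 IH2 | C1 IH1 C2 IH2 | a | phi C IH];
    intro f.
  - symmetry; apply wt_add_zero_r.
  - simpl; rewrite (IH2 f), (IH1 (wt_add add _ _)), wp_add, (IH1 (wTl true C2 wt0)).
    apply wt_addA.
  - simpl; rewrite (IH1 f), (IH2 f), !iverson_add; apply wt_addACA.
  - simpl; rewrite (IH1 f), (IH2 f); apply wt_addACA.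
  - simpl; rewrite wt_act0; symmetry; apply wt_add_zero_r.
  - rewrite !wT_While.
    destruct nat_ge_module_cpo as [top HR].
    assert (Hbody : forall A B, wTl true C (wt_add add A B) =
                                wt_add add (wTl false C A) (wTl true C B)).
    { intros A B; rewrite IH, wp_add, wt_addA, <- (IH B); reflexivity. }
    assert (Hsplit : forall A B,
      loop_char phi (wTl true C) f (wt_add add A B) =
      wt_add add (loop_char phi (wTl false C) f A) (loop_char phi (wTl true C) wt0 B)).
    { intros A B; rewrite <- (wt_add_zero_r f) at 1; apply (loop_char_add phi Hbody). }
    unfold loop_fix at 1; apply (epsilon_is_lfp (WR_po HR)).
    apply (lfp_add_gfp_is_gfp HR
             (loop_char_continuous nat_le_module_cpo phi (wT_continuous false C) f)
             (loop_char_continuous HR phi (wT_continuous true C) wt0) Hsplit).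
    + exact (loop_fix_is_sup nat_le_module_cpo phi (wT_continuous false C) f).
    + exact (loop_fix_is_sup HR phi (wT_continuous true C) wt0).
Qed.
End Module.

Theorem mainTheorem5
  (W M Var Val : Type)
  (var_eq_dec : forall x y : Var, {x = y} + {x <> y})
  (mul : W -> W -> W) (one : W)
  (add : M -> M -> M) (zero : M) (act : W -> M -> M)
  (HW : is_monoid mul one)
  (HM : is_left_module mul one add zero act)
  (Hbi : omega_bicontinuous add act)
  (C : prog W Var Val) (f : weighting M Var Val) :
  wlp var_eq_dec add zero act C f =
  wt_add add (wp var_eq_dec add zero act C f)
             (wlp var_eq_dec add zero act C (@wt_zero M Var Val zero)).
Proof.
  exact (wlp_split HM Hbi var_eq_dec C f).
Qed.
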